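(* Let $N$ be a numerical monoid and let $r\in\mathbb{Q}_{>1}\setminus\mathbb{N}$ be such that $S_{r,N}$ is atomic. Let $x$ be a nonzero element of $S_{r,N}$ and let $z=\sum_{i=0}^{n}c_i r^{s_i}\in\mathsf{Z}(x)$ with $c_0,\dots,c_n\in\mathbb{N}$. Then: (1) $|z|=\min\mathsf{L}(x)$ if and only if $c_i<\mathsf{n}(r)^{\delta_i}$ for every $i\in\{0,\dots,n\}$; (2) there is exactly one factorization of $x$ of minimum length; (3) $|z|=\max\mathsf{L}(x)$ if and only if $c_i<\mathsf{d}(r)^{\delta_{i-1}}$ for every $i\in\{1,\dots,n\}$; (4) there is exactly one factorization of $x$ of maximum length; (5) if $c_i<\mathsf{d}(r)$ for every $i\in\{0,\dots,n\}$, then $|\mathsf{Z}(x)|=1$.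
   Context: $\mathbb{N}=\{0,1,2,\dots\}$. A numerical monoid $N$ is an additive submonoid of $\mathbb{N}$ with finite complement in $\mathbb{N}$. For $r\in\mathbb{Q}_{>0}$ write $r=\mathsf{n}(r)/\mathsf{d}(r)$ with $\mathsf{n}(r),\mathsf{d}(r)$ coprime positive integers. The exponential Puiseux semiring $S_{r,N}$ is the additive submonoid of $\mathbb{Q}_{\ge 0}$ generated by $\{r^k: k\in N\}$. Let $s_0<s_1<s_2<\cdots$ be the elements of $N$ in increasing order (so $s_0=0$) and $\delta_n=s_{n+1}-s_n$. When $\mathsf{n}(r)>1$ and $\mathsf{d}(r)>1$, $S_{r,N}$ is atomic with set of atoms $\{r^{s}: s\in N\}$. For an atomic monoid $M$ (written additively), $\mathsf{Z}(M)$ is the free commutative monoid on the set of atoms, $\pi:\mathsf{Z}(M)\to M$ the homomorphism sending each atom to itself, $\mathsf{Z}(x)=\pi^{-1}(x)$ the set of factorizations of $x$, $|z|$ the number of atoms (with multiplicity) in $z$, and $\mathsf{L}(x)=\{|z|: z\in\mathsf{Z}(x)\}$ the set of lengths of $x$. A factorization $\sum c_i r^{s_i}$ means the formal sum with $c_i$ copies of the atom $r^{s_i}$. *)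

From mathcomp Require Import all_boot all_order all_algebra.
Set Implicit Arguments. Unset Strict Implicit. Unset Printing Implicit Defensive.
Import Order.TTheory GRing.Theory Num.Theory.
Local Open Scope ring_scope.

Definition numerical_monoid (N : pred nat) : Prop :=
  [/\ N 0%N, (forall a b, N a -> N b -> N (a + b)%N)
    & exists B : nat, forall n, (B <= n)%N -> N n].

Definition increasing_enum (N : pred nat) (s : nat -> nat) : Prop :=
  (forall i, (s i < s i.+1)%N) /\ (forall k, N k <-> exists i, s i = k).

Definition puiseux (r : rat) (N : pred nat) (x : rat) : Prop :=
  exists c : seq nat, (forall k, (nth 0%N c k != 0)%N -> N k) /\
    x = \sum_(k < size c) (nth 0%N c k)%:R * r ^+ k.

Definition is_atom (M : rat -> Prop) (a : rat) : Prop :=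
  [/\ M a, a != 0 & forall u v, M u -> M v -> a = u + v -> u = 0 \/ v = 0].

Definition atomic (M : rat -> Prop) : Prop :=
  forall x, M x -> x != 0 ->
    exists l : seq rat, (forall a, a \in l -> is_atom M a) /\ x = \sum_(a <- l) a.

(* A factorization  sum_i c_i r^{s_i}  is encoded by the coefficient sequence c
   (c`_i = multiplicity of the atom r^{s_i}; missing entries are 0). *)
Definition fact_value (r : rat) (s : nat -> nat) (c : seq nat) : rat :=
  \sum_(i < size c) (nth 0%N c i)%:R * r ^+ (s i).

Definition is_fact (r : rat) (s : nat -> nat) (x : rat) (c : seq nat) : Prop :=
  fact_value r s c = x.

Definition fact_len (c : seq nat) : nat := sumn c.

(* Equality of factorizations (as elements of the free commutative monoid). *)
Definition fact_eq (c d : seq nat) : Prop := forall i, nth 0%N c i = nth 0%N d i.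

Definition is_min_fact r s x c : Prop :=
  is_fact r s x c /\ forall d, is_fact r s x d -> (fact_len c <= fact_len d)%N.

Definition is_max_fact r s x c : Prop :=
  is_fact r s x c /\ forall d, is_fact r s x d -> (fact_len d <= fact_len c)%N.

From mathcomp Require Import all_boot all_order all_algebra zify.

Set Implicit Arguments.
Unset Strict Implicit.
Unset Printing Implicit Defensive.

Import Order.TTheory GRing.Theory Num.Theory.

(* Write r = p / q in lowest terms and d_i = s_(i+1) - s_i.  As
   p ^ d_i * r ^ s_i = q ^ d_i * r ^ s_(i+1), trading p ^ d_i copies of the atom
   r ^ s_i for q ^ d_i copies of r ^ s_(i+1) keeps the element and shortens the
   factorization (q < p), while the reverse trade lengthens it.  The factorizations
   admitting no shortening trade are those with c_i < p ^ d_i, and x has at most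
   one of them: after clearing denominators, the c_i are read off like digits
   from the lowest one up, modulo powers of p, which is coprime to q.  Shortening
   trades terminate, so this factorization exists and is the only one of minimal
   length.  Dually, with p and q exchanged and the atoms read from the top down,
   for maximal length; here lengthening trades terminate because every atom is at
   least 1, so lengths are bounded by x.  If all c_i < q, then z is in both forms,
   so all factorizations of x have the same length, are minimal, and hence equal z. *)

Lemma eqn_modMr_coprime m k u v : coprime m k ->
  (u * k == v * k %[mod m]) = (u == v %[mod m]).
Proof.
move=> co_mk; wlog le_vu : u v / v <= u.
  move=> H; case: (leqP v u) => [/H // | /ltnW /H].
  by rewrite eq_sym [X in _ = X]eq_sym.
by rewrite !eqn_mod_dvd ?leq_mul2r ?le_vu ?orbT // -mulnBl Gauss_dvdl.
Qed.

Lemma lowest_digit_eq A B k d e u v R1 R2 : 0 < A -> coprime A B ->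
  u < A ^ d -> v < A ^ d -> A ^ (k + d) %| R1 -> A ^ (k + d) %| R2 ->
  u * A ^ k * B ^ e + R1 = v * A ^ k * B ^ e + R2 -> u = v.
Proof.
move=> A_gt0 coAB u_lt v_lt /eqP R1_0 /eqP R2_0 E.
have : u * A ^ k * B ^ e = v * A ^ k * B ^ e %[mod A ^ (k + d)].
  move: (congr1 (modn^~ (A ^ (k + d))) E) => /=.
  by rewrite -modnDmr R1_0 addn0 -[in RHS]modnDmr R2_0 addn0.
rewrite ![_ * A ^ k * _]mulnAC ![_ * B ^ e * _]mulnC expnD -!muln_modr.
move/eqP; rewrite eqn_pmul2l ?expn_gt0 ?A_gt0 // eqn_modMr_coprime.
  by rewrite !modn_small // => /eqP.
exact/coprimeXl/coprimeXr.
Qed.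

Lemma digits_sum_inj A B M (t e f g : nat -> nat) :
  0 < A -> 0 < B -> coprime A B -> {homo t : i j / i <= j} ->
  (forall i, i.+1 < M -> f i < A ^ (t i.+1 - t i)) ->
  (forall i, i.+1 < M -> g i < A ^ (t i.+1 - t i)) ->
  \sum_(i < M) f i * A ^ t i * B ^ e i = \sum_(i < M) g i * A ^ t i * B ^ e i ->
  forall i, i < M -> f i = g i.
Proof.
move=> A_gt0 B_gt0 coAB.
elim: M t e f g => // M IH t e f g t_homo f_lt g_lt; rewrite !big_ord_recl /=.
have [-> | M_gt0] := posnP M.
  rewrite !big_ord0 !addn0 => /eqP.
  by rewrite !eqn_pmul2r ?expn_gt0 ?A_gt0 ?B_gt0 // => /eqP fg0 [].
have t01 : t 0 + (t 1 - t 0) = t 1 by rewrite subnKC ?t_homo.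
have dvd_tail h : A ^ (t 0 + (t 1 - t 0)) %|
    \sum_(i < M) h (bump 0 i) * A ^ t (bump 0 i) * B ^ e (bump 0 i).
  by rewrite t01; apply: dvdn_sum => i _; apply/dvdn_mulr/dvdn_mull/dvdn_exp2l/t_homo.
move=> E; have fg0 := lowest_digit_eq A_gt0 coAB (f_lt 0 M_gt0) (g_lt 0 M_gt0)
  (dvd_tail f) (dvd_tail g) E.
move: E; rewrite fg0 => /addnI E [|i] // i_lt.
apply: (IH (t \o succn) (e \o succn) (f \o succn) (g \o succn)) => //.
- by move=> m n le_mn; apply: t_homo.
- by move=> m m_lt; apply: f_lt.
- by move=> m m_lt; apply: g_lt.
Qed.

Lemma nth_lt_bound (c : seq nat) i b : 0 < b ->
  (i < size c -> nth 0 c i < b) -> nth 0 c i < b.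
Proof.
by move=> b_gt0; case: (ltnP i (size c)) => [_ /(_ isT) // | le_ci _]; rewrite nth_default.
Qed.

Lemma fact_eq_bounded c d M : size c <= M -> size d <= M ->
  (forall i, i < M -> nth 0 c i = nth 0 d i) -> fact_eq c d.
Proof.
move=> le_cM le_dM cd i; case: (ltnP i M) => [/cd // | le_Mi].
by rewrite !nth_default // (leq_trans _ le_Mi).
Qed.

(* Stated additively to avoid truncated subtraction. *)
Lemma exchange_coef c j k u v : u <= nth 0 c j ->
  exists d, forall i, nth 0 d i + (i == j) * u = nth 0 c i + (i == k) * v.
Proof.
move=> le_u; set M := maxn (size c) k.+1.
exists (mkseq (fun i => nth 0 c i - (i == j) * u + (i == k) * v) M) => i.
case: (ltnP i M) => [lt_iM | le_Mi].
  by rewrite nth_mkseq //; case: (i =P j) => [-> | _]; lia.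
have [le_ci lt_ki] : size c <= i /\ k < i by split; lia.
rewrite !nth_default ?size_mkseq // (gtn_eqF lt_ki).
case: (i =P j) => [ij | _] //.
by move: le_u; rewrite -ij nth_default // leqn0 => /eqP ->.
Qed.

Local Open Scope ring_scope.

Lemma fact_value_widen r s c M : (size c <= M)%N ->
  fact_value r s c = \sum_(i < M) (nth 0%N c i)%:R * r ^+ s i.
Proof.
move=> le_cM; rewrite /fact_value.
rewrite (big_ord_widen M (fun i => (nth 0%N c i)%:R * r ^+ s i) le_cM) big_mkcond.
by apply: eq_bigr => i _; case: ltnP => // le_ci; rewrite nth_default ?mul0r.
Qed.

Lemma fact_value1 s c : fact_value 1 s c = (fact_len c)%:R.
Proof.
rewrite /fact_value /fact_len sumnE (big_nth 0%N) big_mkord natr_sum.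
by apply: eq_bigr => i _; rewrite expr1n mulr1.
Qed.

Lemma fact_value_exchange r s c d j k u v :
  (forall i, nth 0 d i + (i == j) * u = nth 0 c i + (i == k) * v)%N ->
  fact_value r s d + u%:R * r ^+ s j = fact_value r s c + v%:R * r ^+ s k.
Proof.
move=> dc; set M := maxn (maxn (size c) (size d)) (maxn j k).+1.
have sum_delta (a m : nat) : (m < M)%N ->
    \sum_(i < M) ((i == m :> nat) * a)%:R * r ^+ s i = a%:R * r ^+ s m.
  move=> lt_mM; rewrite (bigD1 (Ordinal lt_mM)) //= eqxx mul1n big1 ?addr0 // => i.
  by rewrite -val_eqE /= => /negbTE ->; rewrite mul0r.
have [le_cM le_dM lt_jM lt_kM] :
    [/\ size c <= M, size d <= M, j < M & k < M]%N by split; lia.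
rewrite (fact_value_widen _ _ le_cM) (fact_value_widen _ _ le_dM).
rewrite -(sum_delta u j) // -(sum_delta v k) // -!big_split /=.
by apply: eq_bigr => i _; rewrite -!mulrDl -!natrD dc.
Qed.

Lemma fact_len_exchange c d j k u v :
  (forall i, nth 0 d i + (i == j) * u = nth 0 c i + (i == k) * v)%N ->
  (fact_len d + u = fact_len c + v)%N.
Proof.
move=> /(fact_value_exchange 1 id); rewrite !expr1n !mulr1 !fact_value1 -!natrD.
by move/eqP; rewrite eqr_nat => /eqP.
Qed.

Lemma fact_eq_value r s c d : fact_eq c d -> fact_value r s c = fact_value r s d.
Proof.
move=> cd; set M := maxn (size c) (size d).
rewrite !(@fact_value_widen _ _ _ M) ?leq_maxl ?leq_maxr //.
by apply: eq_bigr => i _; rewrite cd.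
Qed.

Lemma fact_eq_len c d : fact_eq c d -> fact_len c = fact_len d.
Proof.
by move=> /(fact_eq_value 1 id) /eqP; rewrite !fact_value1 eqr_nat => /eqP.
Qed.

Section Factorizations.

Variables (r : rat) (p q : nat) (s : nat -> nat).
Hypotheses (r_gt1 : 1 < r) (q_gt0 : (0 < q)%N) (rq_p : r * q%:R = p%:R)
  (coprime_pq : coprime p q) (s_incr : forall i, (s i < s i.+1)%N).
(* So p = n(r) and q = d(r). *)

Local Notation value := (fact_value r s).

Lemma q_lt_p : (q < p)%N.
Proof. by rewrite -(ltr_nat rat) -rq_p ltr_pMl ?ltr0n. Qed.

Lemma p_gt0 : (0 < p)%N.
Proof. exact: leq_ltn_trans (leq0n q) q_lt_p. Qed.

Lemma s_homo : {homo s : i j / (i <= j)%N}.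
Proof. exact: homo_leq leqnn leq_trans (fun i => ltnW (s_incr i)). Qed.

Lemma exp_trade t d : (p ^ d)%:R * r ^+ t = (q ^ d)%:R * r ^+ (t + d).
Proof. by rewrite !natrX exprD mulrCA -exprMn [_ * r]mulrC rq_p mulrC. Qed.

Definition min_digits c :=
  [forall i : 'I_(size c), nth 0 c i < p ^ (s i.+1 - s i)]%N.

Definition max_digits c :=
  [forall i : 'I_(size c), (0 < i) ==> (nth 0 c i < q ^ (s i - s i.-1))]%N.

Lemma min_digitsP c :
  reflect (forall i, i < size c -> nth 0 c i < p ^ (s i.+1 - s i))%N (min_digits c).
Proof.
apply: (iffP forallP) => [c_lt i lt_ic | c_lt i]; last exact: c_lt.
exact: (c_lt (Ordinal lt_ic)).
Qed.

Lemma max_digitsP c :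
  reflect (forall i, 0 < i -> i < size c -> nth 0 c i < q ^ (s i - s i.-1))%N
    (max_digits c).
Proof.
apply: (iffP forallP) => [c_lt i i_gt0 lt_ic | c_lt i].
  exact: implyP (c_lt (Ordinal lt_ic)) i_gt0.
by apply/implyP => /c_lt; apply.
Qed.

Lemma trade_shortens c d j :
  (forall i, nth 0 d i + (i == j) * p ^ (s j.+1 - s j)
             = nth 0 c i + (i == j.+1) * q ^ (s j.+1 - s j))%N ->
  value d = value c /\ (fact_len d < fact_len c)%N.
Proof.
move=> dc; have gap_gt0 : (0 < s j.+1 - s j)%N by rewrite subn_gt0.
split.
  move: (fact_value_exchange r s dc).
  by rewrite exp_trade (subnKC (ltnW (s_incr j))) => /addIr.
rewrite -(ltn_add2r (p ^ (s j.+1 - s j))) (fact_len_exchange dc) ltn_add2l.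
by rewrite ltn_exp2r ?q_lt_p.
Qed.

Lemma fact_shorten c j : (p ^ (s j.+1 - s j) <= nth 0 c j)%N ->
  exists d, value d = value c /\ (fact_len d < fact_len c)%N.
Proof.
by move=> /(exchange_coef j.+1 (q ^ (s j.+1 - s j))) [d /trade_shortens]; exists d.
Qed.

Lemma fact_lengthen c j : (q ^ (s j.+1 - s j) <= nth 0 c j.+1)%N ->
  exists d, value d = value c /\ (fact_len c < fact_len d)%N.
Proof.
move=> /(exchange_coef j (p ^ (s j.+1 - s j))) [d dc].
by have [vc lt_cd] := trade_shortens (fun i => esym (dc i)); exists d.
Qed.

Lemma fact_len_le_value c : (fact_len c)%:R <= value c.
Proof.
rewrite -(fact_value1 s) /fact_value ler_sum // => i _.
by rewrite expr1n ler_wpM2l // exprn_ege1 // ltW.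
Qed.

Lemma fact_value_cleared c d M : (size c <= M)%N -> (size d <= M)%N ->
  value c = value d ->
  (\sum_(i < M) nth 0 c i * p ^ s i * q ^ (s M - s i)
   = \sum_(i < M) nth 0 d i * p ^ s i * q ^ (s M - s i))%N.
Proof.
have cleared e : (size e <= M)%N -> value e * (q ^ s M)%:R
    = (\sum_(i < M) nth 0 e i * p ^ s i * q ^ (s M - s i))%N%:R.
  move=> le_eM; rewrite (fact_value_widen _ _ le_eM) mulr_suml natr_sum.
  apply: eq_bigr => i _; have le_iM := s_homo (ltnW (ltn_ord i)).
  by rewrite -{1}(subnKC le_iM) expnD !natrM !natrX -rq_p exprMn !mulrA.
move=> le_cM le_dM vcd; apply/eqP; rewrite -(eqr_nat rat) -!cleared //.
by rewrite vcd.
Qed.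

Lemma min_digits_uniq c d : value c = value d ->
  min_digits c -> min_digits d -> fact_eq c d.
Proof.
move=> vcd /min_digitsP c_lt /min_digitsP d_lt; set M := maxn (size c) (size d).
have le_cM : (size c <= M)%N by apply: leq_maxl.
have le_dM : (size d <= M)%N by apply: leq_maxr.
apply: (fact_eq_bounded le_cM le_dM) => i.
apply: (@digits_sum_inj _ _ _ _ (fun i => s M - s i)%N _ _ p_gt0 q_gt0 coprime_pq
  s_homo _ _ (fact_value_cleared le_cM le_dM vcd)).
  by move=> k _; apply: nth_lt_bound (c_lt k); rewrite expn_gt0 p_gt0.
by move=> k _; apply: nth_lt_bound (d_lt k); rewrite expn_gt0 p_gt0.
Qed.

(* Read from the top down, with p and q exchanged, the max digits are min digits. *)
Lemma max_digits_uniq c d : value c = value d ->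
  max_digits c -> max_digits d -> fact_eq c d.
Proof.
move=> vcd /max_digitsP c_lt /max_digitsP d_lt; set M := maxn (size c) (size d).
have le_cM : (size c <= M)%N by apply: leq_maxl.
have le_dM : (size d <= M)%N by apply: leq_maxr.
have cleared_rev e :
  (\sum_(i < M) nth 0 e i * p ^ s i * q ^ (s M - s i)
   = \sum_(i < M) nth 0 e (M - i.+1) * q ^ (s M - s (M - i.+1)) * p ^ s (M - i.+1))%N.
  by rewrite [LHS](reindex_inj rev_ord_inj); apply: eq_bigr => i _; rewrite mulnAC.
have gap i : (i.+1 < M)%N ->
    (s M - s (M - i.+2) - (s M - s (M - i.+1)) = s (M - i.+1) - s (M - i.+1).-1)%N.
  move=> lt_iM; have le_i21 : (s (M - i.+2) <= s (M - i.+1))%N by apply: s_homo; lia.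
  have le_i1M : (s (M - i.+1) <= s M)%N by apply/s_homo/leq_subr.
  by rewrite (_ : (M - i.+1).-1 = M - i.+2)%N; lia.
have t_homo : {homo (fun i => s M - s (M - i.+1))%N : i j / (i <= j)%N}.
  by move=> i j le_ij; apply/leq_sub2l/s_homo; lia.
have := fact_value_cleared le_cM le_dM vcd; rewrite !cleared_rev => E.
apply: (fact_eq_bounded le_cM le_dM) => k lt_kM.
have mirror : k = (M - (M - k.+1).+1)%N by lia.
rewrite mirror; apply: (@digits_sum_inj q p M _ (fun i => s (M - i.+1))
  (fun i => nth 0 c (M - i.+1)) (fun i => nth 0 d (M - i.+1)) q_gt0 p_gt0 _ t_homo _ _ E).
- by rewrite coprime_sym.
- move=> i lt_iM; rewrite gap //; apply: nth_lt_bound (c_lt _ _) => //.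
  + by rewrite expn_gt0 q_gt0.
  + lia.
- move=> i lt_iM; rewrite gap //; apply: nth_lt_bound (d_lt _ _) => //.
  + by rewrite expn_gt0 q_gt0.
  + lia.
- lia.
Qed.

Lemma exists_min_digits c :
  exists d, [/\ value d = value c, min_digits d & (fact_len d <= fact_len c)%N].
Proof.
have [n] := ubnP (fact_len c); elim: n c => // n IH c lt_cn.
case: (boolP (min_digits c)) => [min_c | /forallPn [i]]; first by exists c.
rewrite -leqNgt => /fact_shorten [d [vd lt_dc]].
have [e [ve min_e le_ed]] := IH d (leq_trans lt_dc lt_cn).
by exists e; rewrite ve vd (leq_trans le_ed (ltnW lt_dc)).
Qed.

Lemma exists_max_digits c :
  exists d, [/\ value d = value c, max_digits d & (fact_len c <= fact_len d)%N].
Proof.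
pose K := Num.Def.archi_bound (value c).
have le_K d : value d = value c -> (fact_len d <= K)%N.
  move=> vd; apply: ltnW; rewrite -(ltr_nat rat); apply: le_lt_trans (fact_len_le_value d) _.
  by rewrite vd archi_boundP // (le_trans _ (fact_len_le_value c)).
suff max_from n c' : value c' = value c -> (K - fact_len c' < n)%N ->
    exists d, [/\ value d = value c', max_digits d & (fact_len c' <= fact_len d)%N].
  exact: max_from (ltnSn _).
elim: n c' => // n IH c' vc' lt_n.
case: (boolP (max_digits c')) => [max_c | /forallPn [[[|j] lt_jc]]] //=; first by exists c'.
rewrite -leqNgt => /fact_lengthen [d [vd lt_cd]].
have le_dK := le_K d (etrans vd vc').
have [|e [ve max_e le_de]] := IH d (etrans vd vc'); first lia.
by exists e; rewrite ve vd (leq_trans (ltnW lt_cd) le_de).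
Qed.

Lemma is_min_factP x c : is_fact r s x c -> is_min_fact r s x c <-> min_digits c.
Proof.
move=> fc; split=> [[_ min_len] | min_c].
  apply/forallP => i; rewrite ltnNge; apply/negP => /fact_shorten [d [vd lt_dc]].
  by move: (min_len d (etrans vd fc)); rewrite leqNgt lt_dc.
split=> // d fd; have [e [ve min_e le_ed]] := exists_min_digits d.
by rewrite (fact_eq_len (min_digits_uniq _ min_c min_e)) // ve fc fd.
Qed.

Lemma is_max_factP x c : is_fact r s x c -> is_max_fact r s x c <-> max_digits c.
Proof.
move=> fc; split=> [[_ max_len] | max_c].
  apply/forallP => -[[|j] lt_jc] //=; rewrite ltnNge; apply/negP.
  move=> /fact_lengthen [d [vd lt_cd]].
  by move: (max_len d (etrans vd fc)); rewrite leqNgt lt_cd.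
split=> // d fd; have [e [ve max_e le_de]] := exists_max_digits d.
by rewrite (fact_eq_len (max_digits_uniq _ max_c max_e)) // ve fc fd.
Qed.

Lemma min_fact_unique x c : is_fact r s x c ->
  exists z, is_min_fact r s x z /\ forall w, is_min_fact r s x w -> fact_eq w z.
Proof.
move=> fc; have [z [vz min_z _]] := exists_min_digits c.
have fz : is_fact r s x z by rewrite /is_fact vz.
exists z; split=> [|w min_w]; first exact/(is_min_factP fz).
have fw := min_w.1; apply: min_digits_uniq min_z; first by rewrite fw fz.
exact/(is_min_factP fw).
Qed.

Lemma max_fact_unique x c : is_fact r s x c ->
  exists z, is_max_fact r s x z /\ forall w, is_max_fact r s x w -> fact_eq w z.
Proof.
move=> fc; have [z [vz max_z _]] := exists_max_digits c.
have fz : is_fact r s x z by rewrite /is_fact vz.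
exists z; split=> [|w max_w]; first exact/(is_max_factP fz).
have fw := max_w.1; apply: max_digits_uniq max_z; first by rewrite fw fz.
exact/(is_max_factP fw).
Qed.

Lemma small_digits_fact_unique x c : is_fact r s x c ->
  (forall i, i < size c -> nth 0 c i < q)%N -> forall w, is_fact r s x w -> fact_eq w c.
Proof.
move=> fc c_lt w fw.
have min_c : min_digits c.
  apply/min_digitsP => i /c_lt /leq_trans; apply; apply: leq_trans (ltnW q_lt_p) _.
  by rewrite -{1}(expn1 p) leq_pexp2l ?p_gt0 // subn_gt0.
have max_c : max_digits c.
  apply/max_digitsP => i i_gt0 /c_lt /leq_trans; apply.
  by rewrite -{1}(expn1 q) leq_pexp2l // subn_gt0 -(prednK i_gt0).
have [_ min_len] := (is_min_factP fc).2 min_c.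
have [_ max_len] := (is_max_factP fc).2 max_c.
apply: min_digits_uniq min_c; first by rewrite fw fc.
apply/(is_min_factP fw); split=> // d fd.
exact: leq_trans (max_len w fw) (min_len d fd).
Qed.

End Factorizations.

Lemma ltz_natX n m k : (n%:Z < m%:Z ^+ k) = (n < m ^ k)%N.
Proof. by rewrite -!natz -natrX ltr_nat. Qed.

Theorem mainTheorem1 (N : pred nat) (s : nat -> nat) (r : rat)
  (hN : numerical_monoid N) (hs : increasing_enum N s)
  (hr1 : 1 < r) (hrnat : ~ exists m : nat, r = m%:R)
  (hat : atomic (puiseux r N))
  (x : rat) (hxS : puiseux r N x) (hx0 : x != 0)
  (c : seq nat) (hz : is_fact r s x c) :
  [/\ (* (1) *)
      is_min_fact r s x c <->
        (forall i, (i < size c)%N -> (nth 0%N c i)%:Z < numq r ^+ (s i.+1 - s i)),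
      (* (2) *)
      (exists z, is_min_fact r s x z /\
         forall w, is_min_fact r s x w -> fact_eq w z),
      (* (3) *)
      is_max_fact r s x c <->
        (forall i, (0 < i)%N -> (i < size c)%N ->
           (nth 0%N c i)%:Z < denq r ^+ (s i - s i.-1)),
      (* (4) *)
      (exists z, is_max_fact r s x z /\
         forall w, is_max_fact r s x w -> fact_eq w z)
    & (* (5) *)
      (forall i, (i < size c)%N -> (nth 0%N c i)%:Z < denq r) ->
        forall w, is_fact r s x w -> fact_eq w c ].
Proof.
have [s_incr _] := hs.
set p := `|numq r|%N; set q := `|denq r|%N.
have num_r : numq r = p by rewrite gez0_abs // ltW // numq_gt0 (lt_trans ltr01).
have den_r : denq r = q by rewrite gez0_abs // ltW.
have rq_p : r * q%:R = p%:R by rewrite !pmulrn -num_r -den_r numqE.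
have q_gt0 : (0 < q)%N by rewrite -ltz_nat -den_r.
have co_pq : coprime p q := coprime_num_den r.
rewrite num_r den_r; split.
- apply: iff_trans (is_min_factP hr1 q_gt0 rq_p co_pq s_incr hz) _.
  by split=> [/min_digitsP c_lt i /c_lt | c_lt]; last apply/min_digitsP => i /c_lt;
    rewrite ltz_natX.
- exact: (min_fact_unique hr1 q_gt0 rq_p co_pq s_incr hz).
- apply: iff_trans (is_max_factP hr1 q_gt0 rq_p co_pq s_incr hz) _.
  by split=> [/max_digitsP c_lt i i_gt0 /(c_lt _ i_gt0) | c_lt];
    last apply/max_digitsP => i i_gt0 /(c_lt _ i_gt0); rewrite ltz_natX.
- exact: (max_fact_unique hr1 q_gt0 rq_p co_pq s_incr hz).
- move=> c_lt; apply: (small_digits_fact_unique hr1 q_gt0 rq_p co_pq s_incr hz).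
  by move=> i /c_lt; rewrite ltz_nat.
Qed.
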